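(* Let $T\in\mathbb{B}(\mathscr{H})$. Then \[ \omega^{2}(T)+\inf_{x\in\mathscr{H},\ \|x\|=1}\left\{\left|\langle |T||T^*|x,x\rangle-\langle |T|x,x\rangle\langle |T^*|x,x\rangle\right|\right\}\le\frac12\left\||T|^{2}+|T^*|^{2}\right\|. \]
   Context: $\mathbb{B}(\mathscr{H})$ is the algebra of bounded operators on a complex Hilbert space $\mathscr{H}$; $|T|=(T^*T)^{1/2}$, $|T^*|=(TT^* )^{1/2}$; $\omega(T)=\sup_{\|x\|=1}|\langle Tx,x\rangle|$ is the numerical radius, and $\|\cdot\|$ is the operator norm. *)

From HB Require Import structures.
From mathcomp Require Import all_boot all_order all_algebra.
From mathcomp Require Import all_classical all_reals.
From mathcomp Require Import complex.

Set Implicit Arguments.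
Unset Strict Implicit.
Unset Printing Implicit Defensive.

Import Order.TTheory GRing.Theory Num.Theory.
Local Open Scope ring_scope.
Local Open Scope classical_set_scope.

Section HilbertDefs.
Variables (R : realType) (V : lmodType R[i]) (ip : V -> V -> R[i]).

Definition cmod (z : R[i]) : R := Normc.normc z.

Definition is_inner_product : Prop :=
  [/\ forall (a : R[i]) (x y z : V), ip (a *: x + y) z = a * ip x z + ip y z,
      forall x y : V, ip y x = conjc (ip x y),
      forall x : V, 0 <= ip x x &
      forall x : V, ip x x = 0 -> x = 0].

Definition hnorm (x : V) : R := Num.sqrt (complex.Re (ip x x)).

Definition is_complete : Prop :=
  forall u : nat -> V,
    (forall e : R, 0 < e -> exists N, forall m n, (N <= m)%N -> (N <= n)%N ->
        hnorm (u m - u n) < e) ->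
    exists l : V, forall e : R, 0 < e -> exists N, forall n, (N <= n)%N ->
        hnorm (u n - l) < e.

Definition is_hilbert : Prop := is_inner_product /\ is_complete.

Definition is_bounded_op (T : V -> V) : Prop :=
  (forall (a : R[i]) (x y : V), T (a *: x + y) = a *: T x + T y) /\
  exists M : R, forall x, hnorm (T x) <= M * hnorm x.

Definition is_adjoint (T S : V -> V) : Prop :=
  forall x y : V, ip (T x) y = ip x (S y).

Definition is_positive_op (A : V -> V) : Prop :=
  is_bounded_op A /\ forall x, 0 <= ip (A x) x.

Definition is_pos_sqrt (A P : V -> V) : Prop :=
  is_positive_op A /\ forall x, A (A x) = P x.

Definition unit_sphere : set V := [set x | hnorm x = 1].

Definition numrad (T : V -> V) : R :=
  sup [set cmod (ip (T x) x) | x in unit_sphere].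

Definition opnorm (T : V -> V) : R :=
  sup [set hnorm (T x) | x in unit_sphere].

End HilbertDefs.

From HB Require Import structures.
From mathcomp Require Import all_boot all_order all_algebra.
From mathcomp Require Import all_classical all_reals.
From mathcomp Require Import complex.
From mathcomp Require Import ring lra.

(* Write a = |T| and b = |T^*|, so that <a^2 x, x> = ||Tx||^2 and
   <b^2 x, x> = ||T^* x||^2.  Since |<Tx, x>| = |<x, T^* x>|, Cauchy-Schwarz
   gives 2 |<Tx, x>|^2 <= <(a^2 + b^2) x, x> <= ||a^2 + b^2|| on the unit
   sphere, which already bounds the first summand; it remains to see that the
   infimum is not positive.  A positive operator a whose quadratic form is
   bounded by M on the unit sphere satisfies a^2 <= M a, so for a unit vector
   x with <ax, x> close to M the vector ax - <ax, x> x is small, since its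
   squared norm is ||ax||^2 - <ax, x>^2.  As a is self-adjoint,
   <abx, x> - <ax, x><bx, x> = <bx, ax - <ax, x> x>, which is then small too. *)

Set Implicit Arguments.
Unset Strict Implicit.
Unset Printing Implicit Defensive.

Import Order.TTheory GRing.Theory Num.Theory.
Local Open Scope ring_scope.
Local Open Scope classical_set_scope.
Local Open Scope complex_scope.

(* Unqualified [Re] and [Im] would be those of [Num.Theory], which take values
   in [R[i]] rather than [R]. *)
Local Notation Re := complex.Re.
Local Notation Im := complex.Im.

Section ComplexModulus.
Variable R : realType.
Implicit Types (z : R[i]) (r : R).

Lemma cmod_ge0 z : 0 <= cmod z.
Proof. by case: z => a b; apply: sqrtr_ge0. Qed.

Lemma cmod_sqr z : cmod z ^+ 2 = Re z ^+ 2 + Im z ^+ 2.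
Proof. by case: z => a b; rewrite /cmod /= sqr_sqrtr // addr_ge0 // sqr_ge0. Qed.

Lemma cmod_conj z : cmod (conjc z) = cmod z.
Proof. by case: z => a b; rewrite /cmod /= sqrrN. Qed.

Lemma cmod_real r : cmod r%:C = `|r|.
Proof. by rewrite /cmod /= expr0n addr0 sqrtr_sqr. Qed.

Lemma mulc_conj z : z * conjc z = (cmod z ^+ 2)%:C.
Proof.
rewrite cmod_sqr; case: z => a b /=.
by apply/eqP; rewrite eq_complex /=; apply/andP; split; apply/eqP; ring.
Qed.

Lemma Re_le_cmod z : Re z <= cmod z.
Proof.
case: z => a b; rewrite /cmod /=; apply: le_trans (ler_norm a) _.
by rewrite -sqrtr_sqr ler_wsqrtr // lerDl sqr_ge0.
Qed.

Lemma Re_realM r z : Re (r%:C * z) = r * Re z.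
Proof. by case: z => ? ? /=; rewrite mul0r subr0. Qed.

Lemma Re_conj z : Re (conjc z) = Re z.
Proof. by case: z. Qed.

Lemma Re_ge0 z : 0 <= z -> 0 <= Re z.
Proof. by case: z => a b; rewrite lecE /= => /andP[]. Qed.

Lemma ge0_real z : 0 <= z -> z = (Re z)%:C.
Proof. by case: z => a b; rewrite lecE /= => /andP[/eqP -> _]. Qed.

End ComplexModulus.

Section SupInf.
Variable R : realType.
Implicit Types (S : set R) (c : R).

Lemma sup_sqr_le S c : S !=set0 ->
  (forall s, S s -> 0 <= s /\ s ^+ 2 <= c) -> sup S ^+ 2 <= c.
Proof.
move=> S0 hS; have [s0 Ss0] := S0; have [s0_ge0 s0c] := hS s0 Ss0.
have c_ge0 : 0 <= c := le_trans (sqr_ge0 s0) s0c.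
have ub : ubound S (Num.sqrt c).
  move=> s /hS [s_ge0 sc].
  by rewrite -(ger0_norm s_ge0) -sqrtr_sqr ler_wsqrtr.
have sup_ge0 : 0 <= sup S.
  by apply: le_trans s0_ge0 (ub_le_sup _ Ss0); exists (Num.sqrt c).
by rewrite -(sqr_sqrtr c_ge0) ler_sqr ?nnegrE ?sqrtr_ge0 //; apply: ge_sup.
Qed.

Lemma inf_le0 S : has_lbound S ->
  (forall e, 0 < e -> exists2 s, S s & s <= e) -> inf S <= 0.
Proof.
move=> lbS small; have [//|inf_gt0] := lerP (inf S) 0.
have [s Ss s_le] := small (inf S / 2) (divr_gt0 inf_gt0 (ltr0Sn _ 1)).
have := ge_inf lbS Ss; lra.
Qed.

End SupInf.

Section InnerProduct.
Variables (R : realType) (V : lmodType R[i]) (ip : V -> V -> R[i]).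
Hypothesis ip_inner : is_inner_product ip.
Implicit Types (x y z : V) (a : R[i]).

Lemma ipDl x y z : ip (x + y) z = ip x z + ip y z.
Proof. by case: ip_inner => lin _ _ _; rewrite -[x]scale1r lin mul1r scale1r. Qed.

Lemma ip0l z : ip 0 z = 0.
Proof. by apply: (addrI (ip 0 z)); rewrite -ipDl !addr0. Qed.

Lemma ipZl a x z : ip (a *: x) z = a * ip x z.
Proof. by case: ip_inner => lin _ _ _; rewrite -[a *: x]addr0 lin ip0l addr0. Qed.

Lemma ipC x y : ip y x = conjc (ip x y).
Proof. by case: ip_inner. Qed.

Lemma ipDr x y z : ip z (x + y) = ip z x + ip z y.
Proof. by rewrite ipC [ip z x]ipC [ip z y]ipC ipDl rmorphD. Qed.

Lemma ipZr a x z : ip z (a *: x) = conjc a * ip z x.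
Proof. by rewrite ipC [ip z x]ipC ipZl rmorphM. Qed.

Lemma ip0r z : ip z 0 = 0.
Proof. by rewrite ipC ip0l rmorph0. Qed.

Lemma ipBl x y z : ip (x - y) z = ip x z - ip y z.
Proof. by rewrite ipDl -scaleN1r ipZl mulN1r. Qed.

Lemma ipBr x y z : ip z (x - y) = ip z x - ip z y.
Proof. by rewrite ipDr -scaleN1r ipZr rmorphN rmorph1 mulN1r. Qed.

Definition sqnorm x := Re (ip x x).

Lemma sqnorm_ge0 x : 0 <= sqnorm x.
Proof. by apply: Re_ge0; case: ip_inner. Qed.

Lemma ip_sqnorm x : ip x x = (sqnorm x)%:C.
Proof. by apply: ge0_real; case: ip_inner. Qed.

Lemma sqnorm_eq0 x : sqnorm x = 0 -> x = 0.
Proof. by move=> x0; case: ip_inner => _ _ _; apply; rewrite ip_sqnorm x0. Qed.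

Lemma hnorm_ge0 x : 0 <= hnorm ip x.
Proof. exact: sqrtr_ge0. Qed.

Lemma hnorm_sqr x : hnorm ip x ^+ 2 = sqnorm x.
Proof. by rewrite sqr_sqrtr // sqnorm_ge0. Qed.

Lemma sqnorm_unit x : hnorm ip x = 1 -> sqnorm x = 1.
Proof. by move=> x1; rewrite -hnorm_sqr x1 expr1n. Qed.

Lemma hnorm_gt0 x : x != 0 -> 0 < hnorm ip x.
Proof.
move=> x_neq0; rewrite lt_def hnorm_ge0 andbT; apply: contraNneq x_neq0 => x0.
by apply/eqP/sqnorm_eq0; rewrite -hnorm_sqr x0 expr0n.
Qed.

(* The squared norm of [<w,w> u - <u,w> w] is <w,w> (<u,u><w,w> - |<u,w>|^2). *)
Lemma cauchy_schwarz u w : cmod (ip u w) ^+ 2 <= sqnorm u * sqnorm w.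
Proof.
have [->|w_neq0] := eqVneq w 0.
  by rewrite ip0r cmod_sqr /= expr2 mul0r addr0 mulr_ge0 // sqnorm_ge0.
have r_gt0 : 0 < sqnorm w.
  by rewrite -hnorm_sqr exprn_gt0 // hnorm_gt0.
set c := ip u w; set r := sqnorm w; set s := sqnorm u.
pose v := r%:C *: u - c *: w.
have ip_v : ip v v = (r * (r * s - cmod c ^+ 2))%:C.
  rewrite /v !ipBl !ipBr !ipZl !ipZr !ip_sqnorm -/r -/s [ip w u]ipC -/c.
  by rewrite conjc_real rmorphM rmorphB /= rmorphM /= -mulc_conj; ring.
have := sqnorm_ge0 v; rewrite /sqnorm ip_v /= pmulr_rge0 //.
by rewrite subr_ge0 mulrC.
Qed.

Lemma cauchy_schwarz_hnorm u w : cmod (ip u w) <= hnorm ip u * hnorm ip w.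
Proof.
rewrite -ler_sqr ?nnegrE ?cmod_ge0 ?mulr_ge0 ?hnorm_ge0 //.
by rewrite exprMn !hnorm_sqr cauchy_schwarz.
Qed.

Lemma hnormD u v : hnorm ip (u + v) <= hnorm ip u + hnorm ip v.
Proof.
rewrite -ler_sqr ?nnegrE ?addr_ge0 ?hnorm_ge0 // sqrrD !hnorm_sqr.
rewrite /sqnorm ipDl !ipDr !raddfD /= -/(sqnorm u) -/(sqnorm v).
have uv := le_trans (Re_le_cmod (ip u v)) (cauchy_schwarz_hnorm u v).
have vu := le_trans (Re_le_cmod (ip v u)) (cauchy_schwarz_hnorm v u).
rewrite (mulrC (hnorm ip v)) in vu; lra.
Qed.

Lemma hnormZ a x : hnorm ip (a *: x) = cmod a * hnorm ip x.
Proof.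
rewrite /hnorm ipZl ipZr mulrA mulc_conj Re_realM -/(sqnorm x).
by rewrite sqrtrM ?sqr_ge0 // sqrtr_sqr ger0_norm ?cmod_ge0.
Qed.

Lemma hnorm_normalize x : x != 0 -> hnorm ip ((hnorm ip x)^-1%:C *: x) = 1.
Proof.
move=> x_neq0; have x_gt0 := hnorm_gt0 x_neq0.
by rewrite hnormZ cmod_real ger0_norm ?invr_ge0 ?(ltW x_gt0) // mulVf ?gt_eqF.
Qed.

Section BoundedOperator.
Variable X : V -> V.
Hypothesis X_bounded : is_bounded_op ip X.

Lemma opD x y : X (x + y) = X x + X y.
Proof. by case: X_bounded => lin _; rewrite -[x]scale1r lin !scale1r. Qed.

Lemma op0 : X 0 = 0.
Proof. by apply: (addrI (X 0)); rewrite -opD !addr0. Qed.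

Lemma opZ a x : X (a *: x) = a *: X x.
Proof. by case: X_bounded => lin _; rewrite -[a *: x]addr0 lin op0 addr0. Qed.

Lemma opB x y : X (x - y) = X x - X y.
Proof. by rewrite opD -scaleN1r opZ scaleN1r. Qed.

Lemma bounded_opP : exists2 M, 0 <= M & forall x, hnorm ip (X x) <= M * hnorm ip x.
Proof.
case: X_bounded => _ [M XM]; exists (Num.max M 0); first by rewrite le_max lexx orbT.
by move=> x; apply: le_trans (XM x) _; rewrite ler_wpM2r ?hnorm_ge0 // le_max lexx.
Qed.

End BoundedOperator.

Definition quad (X : V -> V) x := Re (ip (X x) x).

Lemma quad_le_hnorm X x : hnorm ip x = 1 -> quad X x <= hnorm ip (X x).
Proof.
move=> x1; apply: le_trans (Re_le_cmod _) _.
by apply: le_trans (cauchy_schwarz_hnorm _ _) _; rewrite x1 mulr1.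
Qed.

Lemma quad_le_opnorm X M x : (forall y, hnorm ip (X y) <= M * hnorm ip y) ->
  hnorm ip x = 1 -> quad X x <= opnorm ip X.
Proof.
move=> XM x1; apply: le_trans (quad_le_hnorm X x1) _.
apply: ub_le_sup; last by exists x.
by exists M => _ [y y1 <-]; have := XM y; rewrite y1 mulr1.
Qed.

Lemma cmod_ip_sqr_le X x : hnorm ip x = 1 -> cmod (ip (X x) x) ^+ 2 <= sqnorm (X x).
Proof.
move=> x1; apply: le_trans (cauchy_schwarz _ _) _.
by rewrite (sqnorm_unit x1) mulr1.
Qed.

(* Polarization: [f] also vanishes at [x + y] and at [x + 'i y]. *)
Lemma sesqui_diag_eq0 (f : V -> V -> R[i]) :
  (forall x y z, f (x + y) z = f x z + f y z) ->
  (forall a x z, f (a *: x) z = a * f x z) ->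
  (forall x y z, f z (x + y) = f z x + f z y) ->
  (forall a x z, f z (a *: x) = conjc a * f z x) ->
  (forall x, f x x = 0) -> forall x y, f x y = 0.
Proof.
move=> fDl fZl fDr fZr f0 x y.
have fxy := f0 (x + y); rewrite fDl !fDr !f0 add0r addr0 in fxy.
have fxiy := f0 (x + 'i%C *: y).
rewrite fDl !fDr !fZl !fZr !f0 !mulr0 add0r addr0 in fxiy.
have fyx : f y x = - f x y by apply/eqP; rewrite -addr_eq0 addrC fxy.
have i_nreal : conjc 'i%C - 'i%C != 0 :> R[i].
  by rewrite eq_complex /= negb_and; apply/orP; right; apply/eqP; lra.
move: fxiy; rewrite fyx mulrN -mulrBl => /eqP.
by rewrite mulf_eq0 (negPf i_nreal) => /eqP.
Qed.

Lemma posop_selfadj A : is_positive_op ip A -> forall x y, ip (A x) y = ip x (A y).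
Proof.
move=> [A_bounded A_ge0] x y; apply/eqP; rewrite -subr_eq0; apply/eqP.
apply: (@sesqui_diag_eq0 (fun x y => ip (A x) y - ip x (A y)))
  => [u v w|a u w|u v w|a u w|u] /=.
- by rewrite (opD A_bounded) !ipDl; ring.
- by rewrite (opZ A_bounded) !ipZl; ring.
- by rewrite (opD A_bounded) !ipDr; ring.
- by rewrite (opZ A_bounded) !ipZr; ring.
- by rewrite [ip u (A u)]ipC (ge0_real (A_ge0 u)) conjc_real subrr.
Qed.

Section PositiveOperator.
Variable A : V -> V.
Hypothesis A_pos : is_positive_op ip A.
Let A_bounded := A_pos.1.

Lemma quad_ge0 x : 0 <= quad A x.
Proof. exact: Re_ge0 (A_pos.2 x). Qed.

Lemma ip_quad x : ip (A x) x = (quad A x)%:C.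
Proof. exact: ge0_real (A_pos.2 x). Qed.

Lemma quadZ a x : quad A (a *: x) = cmod a ^+ 2 * quad A x.
Proof. by rewrite /quad (opZ A_bounded) ipZl ipZr mulrA mulc_conj Re_realM. Qed.

Lemma quad_le_sqnorm L : (forall x, hnorm ip x = 1 -> quad A x <= L) ->
  forall y, quad A y <= L * sqnorm y.
Proof.
move=> AL y; have [->|y_neq0] := eqVneq y 0.
  by rewrite /quad (op0 A_bounded) ip0r /sqnorm ip0r /= mulr0.
have y_gt0 := hnorm_gt0 y_neq0; set h := hnorm ip y.
have hV_ge0 : 0 <= h^-1 by rewrite invr_ge0 (ltW y_gt0).
have := AL _ (hnorm_normalize y_neq0).
rewrite quadZ cmod_real (ger0_norm hV_ge0) -/h => hL.
have -> : quad A y = h ^+ 2 * (h^-1 ^+ 2 * quad A y).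
  by rewrite mulrA -exprMn mulfV ?gt_eqF // expr1n mul1r.
by rewrite -hnorm_sqr -/h [L * _]mulrC ler_wpM2l // sqr_ge0.
Qed.

(* [A <= L] implies [A^2 <= L A]: expand [0 <= <Ay, y>] for [y = x - L^-1 Ax]. *)
Lemma sqnorm_le_quad L : 0 < L -> (forall y, quad A y <= L * sqnorm y) ->
  forall x, sqnorm (A x) <= L * quad A x.
Proof.
move=> L_gt0 AL x.
set N := sqnorm (A x); set t := L^-1; set a2 := quad A (A x).
pose y := x - t%:C *: A x.
have ip_y : ip (A y) y = (quad A x - 2 * t * N + t ^+ 2 * a2)%:C.
  rewrite /y (opB A_bounded) (opZ A_bounded) !ipBl !ipBr !ipZl !ipZr conjc_real.
  rewrite [ip (A (A x)) x](posop_selfadj A_pos) ip_quad ip_sqnorm (ip_quad (A x)).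
  by rewrite -/N -/a2; apply/eqP; rewrite eq_complex /=; apply/andP; split; apply/eqP; ring.
have quad_y : 0 <= quad A x - 2 * t * N + t ^+ 2 * a2.
  by have := quad_ge0 y; rewrite /quad ip_y.
have a2N : a2 <= L * N := AL (A x).
have scale : L ^+ 2 * (quad A x - 2 * t * N + t ^+ 2 * a2)
             = L * (L * quad A x - N) - L * N + a2.
  by rewrite /t; field; rewrite gt_eqF.
have : 0 <= L * (L * quad A x - N).
  by have := mulr_ge0 (sqr_ge0 L) quad_y; rewrite scale; lra.
by rewrite pmulr_rge0 // subr_ge0.
Qed.

Lemma sqnorm_sub_quad x : hnorm ip x = 1 ->
  sqnorm (A x - (quad A x)%:C *: x) = sqnorm (A x) - quad A x ^+ 2.
Proof.
move=> x1; rewrite /sqnorm !ipBl !ipBr !ipZl !ipZr conjc_real [ip x (A x)]ipC.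
rewrite ip_quad (ip_sqnorm x) sqnorm_unit // conjc_real !raddfB /=.
by rewrite -/(sqnorm (A x)); ring.
Qed.

(* An approximate eigenvector for the top [M] of the numerical range of [A]:
   [sqnorm (Ax - <Ax,x> x) <= <Ax,x> (M + eta - <Ax,x>) <= 2 eta M]. *)
Lemma approx_eigenvector e : (exists x, hnorm ip x = 1) -> 0 < e ->
  exists2 x, hnorm ip x = 1 & sqnorm (A x - (quad A x)%:C *: x) <= e.
Proof.
move=> [x0 x0_1] e_gt0.
set Q := [set quad A x | x in unit_sphere ip].
have [MA _ AMA] := bounded_opP A_bounded.
have Q_sup : has_sup Q.
  split; first by exists (quad A x0), x0.
  exists MA => _ [x x1 <-]; apply: le_trans (quad_le_hnorm A x1) _.
  by have := AMA x; rewrite x1 mulr1.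
set M := sup Q.
have quad_le_M x : hnorm ip x = 1 -> quad A x <= M.
  by move=> x1; apply: (ub_le_sup Q_sup.2); exists x.
have M_ge0 : 0 <= M := le_trans (quad_ge0 x0) (quad_le_M x0 x0_1).
pose eta := e / (2 * (M + 1)).
have eta_gt0 : 0 < eta by rewrite divr_gt0 // mulr_gt0 // ltr_wpDl.
have [_ [x x1 <-]] := sup_adherent eta_gt0 Q_sup; rewrite -/M => near_M.
exists x => //; rewrite sqnorm_sub_quad //.
have ML : 0 < M + eta by rewrite ltr_wpDl.
have quad_le : forall y, quad A y <= (M + eta) * sqnorm y.
  apply: quad_le_sqnorm => y y1.
  by apply: le_trans (quad_le_M y y1) _; rewrite lerDl (ltW eta_gt0).
have N_le := sqnorm_le_quad ML quad_le x.
have a_ge0 := quad_ge0 x; have a_le := quad_le_M x x1.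
have e_eta : e = eta * (2 * (M + 1)).
  by rewrite /eta mulfVK // gt_eqF // mulr_gt0 // ltr_wpDl.
have p1 : 0 <= quad A x * (eta - M + quad A x) by rewrite mulr_ge0 //; lra.
have p2 : 0 <= eta * (M - quad A x) by rewrite mulr_ge0 ?(ltW eta_gt0) ?subr_ge0.
rewrite e_eta; nra.
Qed.

Lemma ip_comp_sub_mul (B : V -> V) x :
  ip (A (B x)) x - ip (A x) x * ip (B x) x = ip (B x) (A x - (quad A x)%:C *: x).
Proof. by rewrite ipBr ipZr conjc_real (posop_selfadj A_pos) ip_quad mulrC. Qed.

End PositiveOperator.

Lemma inf_cmod_ip_comp_sub_mul_le0 A B :
  is_positive_op ip A -> is_bounded_op ip B -> (exists x, hnorm ip x = 1) ->
  inf [set cmod (ip (A (B x)) x - ip (A x) x * ip (B x) x) | x in unit_sphere ip]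
    <= 0.
Proof.
move=> A_pos B_bounded sphere0; apply: inf_le0.
  by exists 0 => _ [x _ <-]; apply: cmod_ge0.
move=> e e_gt0; have [MB MB_ge0 BMB] := bounded_opP B_bounded.
have d_gt0 : 0 < e ^+ 2 / (MB ^+ 2 + 1).
  by rewrite divr_gt0 ?exprn_gt0 // ltr_wpDl ?sqr_ge0.
have [x x1 small] := approx_eigenvector A_pos sphere0 d_gt0.
exists (cmod (ip (A (B x)) x - ip (A x) x * ip (B x) x)); first by exists x.
have Bx : sqnorm (B x) <= MB ^+ 2.
  by rewrite -hnorm_sqr ler_sqr ?nnegrE ?hnorm_ge0 //; have := BMB x; rewrite x1 mulr1.
rewrite ip_comp_sub_mul // -ler_sqr ?nnegrE ?cmod_ge0 ?(ltW e_gt0) //.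
apply: le_trans (cauchy_schwarz _ _) _.
apply: le_trans (ler_pM (sqnorm_ge0 _) (sqnorm_ge0 _) Bx small) _.
rewrite mulrCA ger_pMr ?exprn_gt0 // ler_pdivrMr ?ltr_wpDl ?sqr_ge0 //.
by rewrite mul1r lerDl.
Qed.

Section NumericalRadius.
Variables T Tadj A B : V -> V.
Hypotheses (T_adj : is_adjoint ip T Tadj)
  (A_bounded : is_bounded_op ip A) (B_bounded : is_bounded_op ip B)
  (A_sqr : forall x, A (A x) = Tadj (T x)) (B_sqr : forall x, B (B x) = T (Tadj x)).

Lemma cmod_ip_sqr_le_quad x : hnorm ip x = 1 ->
  2 * cmod (ip (T x) x) ^+ 2 <= quad (fun y => A (A y) + B (B y)) x.
Proof.
move=> x1; rewrite /quad ipDl raddfD /=.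
have TA : cmod (ip (T x) x) ^+ 2 <= Re (ip (A (A x)) x).
  by apply: le_trans (cmod_ip_sqr_le T x1) _; rewrite /sqnorm T_adj -A_sqr ipC Re_conj.
have TB : cmod (ip (T x) x) ^+ 2 <= Re (ip (B (B x)) x).
  rewrite T_adj ipC cmod_conj; apply: le_trans (cmod_ip_sqr_le Tadj x1) _.
  by rewrite /sqnorm -T_adj B_sqr.
lra.
Qed.

Lemma numrad_sqr_le : (exists x, hnorm ip x = 1) ->
  numrad ip T ^+ 2 <= opnorm ip (fun y => A (A y) + B (B y)) / 2.
Proof.
move=> [x0 x0_1]; have [MA MA_ge0 AMA] := bounded_opP A_bounded.
have [MB MB_ge0 BMB] := bounded_opP B_bounded.
have S_bounded y : hnorm ip (A (A y) + B (B y)) <= (MA * MA + MB * MB) * hnorm ip y.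
  rewrite mulrDl -!mulrA; apply: le_trans (hnormD _ _) _.
  by apply: lerD; [apply: le_trans (AMA _) _ | apply: le_trans (BMB _) _];
     rewrite ler_wpM2l.
apply: sup_sqr_le; first by exists (cmod (ip (T x0) x0)), x0.
move=> _ [x x1 <-]; split; first exact: cmod_ge0.
have := quad_le_opnorm S_bounded x1; have := cmod_ip_sqr_le_quad x1.
rewrite ler_pdivlMr //; lra.
Qed.

End NumericalRadius.

End InnerProduct.

Theorem corollary4p2 (R : realType) (V : lmodType R[i]) (ip : V -> V -> R[i])
    (HH : is_hilbert ip) (Hnontriv : exists x : V, x <> 0)
    (T Tadj A B : V -> V)
    (HT : is_bounded_op ip T) (HTadj : is_bounded_op ip Tadj)
    (Hadj : is_adjoint ip T Tadj)
    (HA : is_pos_sqrt ip A (fun x => Tadj (T x)))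
    (HB : is_pos_sqrt ip B (fun x => T (Tadj x))) :
  numrad ip T ^+ 2
    + inf [set cmod (ip (A (B x)) x - ip (A x) x * ip (B x) x)
           | x in unit_sphere ip]
  <= opnorm ip (fun x => A (A x) + B (B x)) / 2.
Proof.
have ip_inner := HH.1.
have sphere0 : exists x, hnorm ip x = 1.
  have [x /eqP x_neq0] := Hnontriv.
  by exists ((hnorm ip x)^-1%:C *: x); apply: hnorm_normalize.
have := numrad_sqr_le ip_inner Hadj HA.1.1 HB.1.1 HA.2 HB.2 sphere0.
have := inf_cmod_ip_comp_sub_mul_le0 ip_inner HA.1 HB.1.1 sphere0.
lra.
Qed.
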